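(* Let $d\ge1$ and let $\mu=\prod_{i=1}^d\mu_i$ be a product probability measure on $\mathbb{R}^d$, where for each $i$, $\mathrm{d}\mu_i(x_i)=\rho_i(|x_i|)\,\mathrm{d}x_i$ is a probability measure on $\mathbb{R}$ with $\rho_i:[0,\infty)\to(0,\infty)$ continuous. Let $a_1,\dots,a_d>0$ and $B=\{x\in\mathbb{R}^d: \sum_{i=1}^d x_i^2/a_i^2\le1\}$. Then for every $f\in\bar{\mathcal{C}}_d$, $$\int_{\mathbb{R}^d} f\,\mathbf{1}_B\,\mathrm{d}\mu\ \ge\ \Big(\int_{\mathbb{R}^d} f\,\mathrm{d}\mu\Big)\,\mu(B).$$
   Context: $\mathcal{C}_1$ denotes the set of continuous compactly supported functions $g:\mathbb{R}\to[0,\infty)$ such that for every $c>0$ the set $\{t: g(t)>c\}$ is convex (an interval), and $g(t)\le g(0)$ for all $t\in\mathbb{R}$. $\bar{\mathcal{C}}_d$ denotes the set of continuous compactly supported functions $f:\mathbb{R}^d\to[0,\infty)$ such that for every $i\in\{1,\dots,d\}$ and every fixed choice of the other coordinates $(x_1,\dots,x_{i-1},x_{i+1},\dots,x_d)\in\mathbb{R}^{d-1}$, the one-variable function $x_i\mapsto f(x_1,\dots,x_{i-1},x_i,x_{i+1},\dots,x_d)$ belongs to $\mathcal{C}_1$. *)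

From Stdlib Require Import Reals Lra Classical ClassicalEpsilon.
Open Scope R_scope.

(* Value of the 1-D Riemann integral of g on [a,b] (when g is Riemann
   integrable there; arbitrary otherwise). *)
Definition RI (g : R -> R) (a b : R) : R :=
  epsilon (inhabits 0)
    (fun v => exists pr : Riemann_integrable g a b, RiemannInt pr = v).

Definition improper_int_R (g : R -> R) (l : R) : Prop :=
  forall eps, 0 < eps -> exists M, forall L, M <= L ->
    Rabs (RI g (- L) L - l) < eps.

(* Points of R^d are represented as x : nat -> R, only x 0, ..., x (d-1)
   being relevant. *)
Definition upd (x : nat -> R) (k : nat) (t : R) : nat -> R :=
  fun j => if Nat.eqb j k then t else x j.

Fixpoint sumR (d : nat) (g : nat -> R) : R :=
  match d with O => 0 | S k => sumR k g + g k end.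
Fixpoint prodR (d : nat) (g : nat -> R) : R :=
  match d with O => 1 | S k => prodR k g * g k end.

Fixpoint box_int (L : R) (k : nat) (F : (nat -> R) -> R) (x : nat -> R) : R :=
  match k with
  | O => F x
  | S j => RI (fun t => box_int L j F (upd x j t)) (- L) L
  end.

(* Integral over R^d (Lebesgue measure), as the limit of integrals over the
   cubes [-L,L]^d as L -> oo. *)
Definition int_Rd_is (d : nat) (F : (nat -> R) -> R) (I : R) : Prop :=
  forall eps, 0 < eps -> exists M, forall L, M <= L ->
    Rabs (box_int L d F (fun _ => 0) - I) < eps.

Definition int_Rd (d : nat) (F : (nat -> R) -> R) : R :=
  epsilon (inhabits 0) (int_Rd_is d F).

Definition class_C1 (g : R -> R) : Prop :=
  continuity g /\
  (exists K, forall t, K < Rabs t -> g t = 0) /\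
  (forall t, 0 <= g t) /\
  (forall c, 0 < c -> forall s t u, s <= t <= u -> c < g s -> c < g u -> c < g t) /\
  (forall t, g t <= g 0).

Definition continuous_Rd (d : nat) (f : (nat -> R) -> R) : Prop :=
  forall x eps, 0 < eps -> exists delta, 0 < delta /\
    forall y, (forall i, (i < d)%nat -> Rabs (y i - x i) < delta) ->
      Rabs (f y - f x) < eps.

Definition class_barCd (d : nat) (f : (nat -> R) -> R) : Prop :=
  continuous_Rd d f /\
  (exists K, forall x, (exists i, (i < d)%nat /\ K < Rabs (x i)) -> f x = 0) /\
  (forall x, 0 <= f x) /\
  (forall i x, (i < d)%nat -> class_C1 (fun t => f (upd x i t))).

(* rho : [0,oo) -> (0,oo) continuous (values outside [0,oo) irrelevant). *)
Definition pos_cont_on_halfline (rho : R -> R) : Prop :=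
  (forall r, 0 <= r -> 0 < rho r) /\
  (forall r eps, 0 <= r -> 0 < eps -> exists delta, 0 < delta /\
     forall s, 0 <= s -> Rabs (s - r) < delta -> Rabs (rho s - rho r) < eps).

Definition density (d : nat) (rho : nat -> R -> R) (x : nat -> R) : R :=
  prodR d (fun i => rho i (Rabs (x i))).

Definition ind_B (d : nat) (a : nat -> R) (x : nat -> R) : R :=
  if Rle_dec (sumR d (fun i => x i ^ 2 / a i ^ 2)) 1 then 1 else 0.

(* Both sides are limits of iterated Riemann integrals over cubes [Q = [-L,L]^d], and for [L]
   large these integrals no longer depend on [L]. With [E] the part of [Q] inside the ellipsoid,
   one proves [int_E f dmu * mu(Q) >= int_Q f dmu * mu(E)] by induction on the number of
   integrated coordinates. Integrating out the first [k] coordinates leaves functions of the next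
   coordinate [t]: the section of [int_Q f] is unimodal in [t], because [f] is unimodal on every
   coordinate line, while the section of [mu(E)] is even and nonincreasing in [|t|], because the
   slices of an ellipsoid shrink. Chebyshev's integral inequality for such a pair against the even
   weight [rho_k(|t|)] is the inductive step. Finally [mu(Q) <= 1]. *)

From Stdlib Require Import Reals Lra Lia Psatz FunctionalExtensionality ClassicalEpsilon Classical.
From Coquelicot Require Import Coquelicot.
Open Scope R_scope.

Notation ex_RInt_R g a b := (@ex_RInt R_CompleteNormedModule g a b).

Lemma RI_RInt g a b : ex_RInt_R g a b -> RI g a b = RInt g a b.
Proof.
  intros H. unfold RI.
  destruct (epsilon_spec (inhabits 0)
    (fun v => exists pr : Riemann_integrable g a b, RiemannInt pr = v)) as [pr Hpr].
  - exists (RiemannInt (ex_RInt_Reals_0 g a b H)), (ex_RInt_Reals_0 g a b H). reflexivity.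
  - rewrite <- Hpr. symmetry. apply RInt_Reals.
Qed.

Lemma ex_RInt_R_continuous g a b : (forall t, continuous g t) -> ex_RInt_R g a b.
Proof. intros H. apply ex_RInt_continuous. intros; apply H. Qed.

Lemma RInt_Chasles_R g a b c :
  ex_RInt_R g a b -> ex_RInt_R g b c -> RInt g a b + RInt g b c = RInt g a c.
Proof. intros. apply (RInt_Chasles g a b c); auto. Qed.

Lemma RInt_scal_R g a b l : ex_RInt_R g a b -> RInt (fun t => l * g t) a b = l * RInt g a b.
Proof. intros. apply (RInt_scal g a b l); auto. Qed.

Lemma RInt_plus_R g h a b : ex_RInt_R g a b -> ex_RInt_R h a b ->
  RInt (fun t => g t + h t) a b = RInt g a b + RInt h a b.
Proof. intros. apply (RInt_plus g h a b); auto. Qed.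

Lemma RInt_minus_R g h a b : ex_RInt_R g a b -> ex_RInt_R h a b ->
  RInt (fun t => g t - h t) a b = RInt g a b - RInt h a b.
Proof. intros. apply (RInt_minus g h a b); auto. Qed.

Lemma RInt_const_R a b c : RInt (fun _ => c) a b = (b - a) * c.
Proof. apply (RInt_const a b c). Qed.

Lemma RInt_swap_R g a b : ex_RInt_R g a b -> RInt g b a = - RInt g a b.
Proof. intros. rewrite <- (opp_RInt_swap g a b); auto. Qed.

Lemma RInt_ext_R (f g : R -> R) a b : (forall x, f x = g x) -> RInt f a b = RInt g a b :> R.
Proof. intros H. apply RInt_ext. intros; apply H. Qed.

Lemma continuous_mult_R (f g : R -> R) t :
  continuous f t -> continuous g t -> continuous (fun y => f y * g y) t.
Proof. intros. apply (continuous_mult f g); auto. Qed.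

Lemma continuous_plus_R (f g : R -> R) t :
  continuous f t -> continuous g t -> continuous (fun y => f y + g y) t.
Proof. intros. apply (continuous_plus f g); auto. Qed.

Lemma continuous_const_R (a t : R) : continuous (fun _ => a) t.
Proof. apply continuous_const. Qed.

Lemma continuous_reflect_R (f : R -> R) t : continuous f (- t) -> continuous (fun y => f (- y)) t.
Proof.
  intros H. apply (continuous_comp (fun y : R => - y) f); auto.
  apply (continuous_opp (fun y : R => y)). apply continuous_id.
Qed.

Lemma continuous_eps_delta f x :
  (forall eps, 0 < eps -> exists del, 0 < del /\
     forall y, Rabs (y - x) < del -> Rabs (f y - f x) < eps) ->
  continuous f x.
Proof.
  intros H. apply filterlim_locally. intros eps.
  destruct (H eps (cond_pos eps)) as [del [Hd Hy]].
  exists (mkposreal del Hd). intros y Hb. apply Hy. exact Hb.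
Qed.

Lemma eps_delta_continuity_pt f x : continuity_pt f x ->
  forall eps, 0 < eps -> exists del, 0 < del /\
    forall y, Rabs (y - x) < del -> Rabs (f y - f x) < eps.
Proof.
  intros H eps He. destruct (H eps He) as [del [Hd Hy]]. exists del. split; auto.
  intros y Hy'. destruct (Req_dec y x) as [->|Hne].
  - rewrite Rminus_diag, Rabs_R0. lra.
  - apply (Hy y). split; [split; [exact I| auto]| exact Hy'].
Qed.

Lemma abs_RInt_le_const_R (f : R -> R) u v M : ex_RInt_R f u v ->
  (forall t, Rmin u v <= t <= Rmax u v -> Rabs (f t) <= M) ->
  Rabs (RInt f u v) <= Rabs (v - u) * M.
Proof.
  intros He Hb. destruct (Rle_dec u v) as [Huv|Huv].
  - rewrite (Rabs_right (v - u)) by lra. apply abs_RInt_le_const; auto.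
    intros t Ht. apply Hb. rewrite Rmin_left, Rmax_right; lra.
  - assert (He' : ex_RInt f v u) by (apply ex_RInt_swap; auto).
    rewrite (RInt_swap_R f v u He'), Rabs_Ropp, (Rabs_left (v - u)) by lra.
    replace (- (v - u)) with (u - v) by ring. apply abs_RInt_le_const; auto; try lra.
    intros t Ht. apply Hb. rewrite Rmin_right, Rmax_left; lra.
Qed.

Lemma RInt_sym_split (g : R -> R) s L : 0 <= s <= L -> (forall t, continuous g t) ->
  RInt g (- L) L = RInt g (- L) (- s) + RInt g (- s) s + RInt g s L.
Proof.
  intros Hs Hc. assert (E : forall u v, ex_RInt_R g u v) by (intros; apply ex_RInt_R_continuous; auto).
  rewrite <- (RInt_Chasles_R g (- L) s L), <- (RInt_Chasles_R g (- L) (- s) s); auto.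
Qed.

Lemma RInt_sym_cut (h : R -> R) K s : 0 <= K <= s -> (forall t, continuous h t) ->
  (forall t, K < Rabs t -> h t = 0) -> RInt h (- s) s = RInt h (- K) K :> R.
Proof.
  intros Hs Hc Hz. rewrite (RInt_sym_split h K s) by auto.
  rewrite (RInt_ext h (fun _ => 0) (- s) (- K)), (RInt_ext h (fun _ => 0) K s).
  - rewrite !RInt_const_R. ring.
  - intros t Ht. rewrite Rmin_left, Rmax_right in Ht by lra.
    apply Hz. rewrite Rabs_right by lra. lra.
  - intros t Ht. rewrite Rmin_left, Rmax_right in Ht by lra.
    apply Hz. rewrite Rabs_left by lra. lra.
Qed.

Lemma RI_of_supported (g h : R -> R) s L : 0 <= s <= L ->
  (forall t, - s <= t <= s -> g t = h t) -> (forall t, s < Rabs t <= L -> g t = 0) ->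
  (forall t, continuous h t) ->
  ex_RInt_R g (- L) L /\ RI g (- L) L = RInt h (- s) s.
Proof.
  intros Hs Hgh Hg0 Hc.
  assert (Hout : forall u v, u <= v -> (forall t, u < t < v -> s < Rabs t <= L) ->
    ex_RInt_R g u v /\ RInt g u v = 0 :> R).
  { intros u v Huv Hin.
    assert (Z : forall t, Rmin u v < t < Rmax u v -> g t = 0).
    { intros t Ht. rewrite Rmin_left, Rmax_right in Ht by lra. apply Hg0, Hin; lra. }
    split.
    - apply (ex_RInt_ext (fun _ => 0)); [|apply ex_RInt_R_continuous, continuous_const_R].
      intros t Ht. symmetry; auto.
    - rewrite (RInt_ext g (fun _ => 0)), RInt_const_R; [ring|auto]. }
  destruct (Hout (- L) (- s)) as [E1 Z1]; [lra| intros t Ht; rewrite Rabs_left by lra; lra|].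
  destruct (Hout s L) as [E3 Z3]; [lra| intros t Ht; rewrite Rabs_right by lra; lra|].
  assert (E2 : ex_RInt_R g (- s) s).
  { apply (ex_RInt_ext h); [|apply ex_RInt_R_continuous; auto].
    intros t Ht. rewrite Rmin_left, Rmax_right in Ht by lra. symmetry; apply Hgh; lra. }
  assert (E12 : ex_RInt_R g (- L) s) by (apply (ex_RInt_Chasles g _ (- s)); auto).
  assert (E : ex_RInt_R g (- L) L) by (apply (ex_RInt_Chasles g _ s); auto).
  split; auto. rewrite RI_RInt by auto.
  rewrite <- (RInt_Chasles_R g (- L) s L), <- (RInt_Chasles_R g (- L) (- s) s), Z1, Z3 by auto.
  rewrite (RInt_ext g h (- s) s); [ring|].
  intros t Ht. rewrite Rmin_left, Rmax_right in Ht by lra. apply Hgh; lra.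
Qed.

Lemma RInt_reflect (g : R -> R) a : (forall t, continuous g t) ->
  RInt (fun t => g (- t)) (- a) a = RInt g (- a) a :> R.
Proof.
  intros Hg.
  assert (E : RInt (fun y => -1 * g (-1 * y + 0)) (- a) a = RInt g (-1 * - a + 0) (-1 * a + 0) :> R)
    by (apply (RInt_comp_lin g (-1) 0 (- a) a), ex_RInt_R_continuous; auto).
  replace (-1 * - a + 0) with a in E by ring. replace (-1 * a + 0) with (- a) in E by ring.
  rewrite (RInt_swap_R g (- a) a) in E by (apply ex_RInt_R_continuous; auto).
  rewrite (RInt_ext_R _ (fun y => -1 * g (- y))) in E by (intros; do 2 f_equal; ring).
  rewrite RInt_scal_R in E by (apply ex_RInt_R_continuous; intros; apply continuous_reflect_R; auto).
  lra.
Qed.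

Lemma RInt_sym_average (g : R -> R) a : (forall t, continuous g t) ->
  RInt (fun t => (g t + g (- t)) / 2) (- a) a = RInt g (- a) a :> R.
Proof.
  intros Hg. assert (Hr : forall t, continuous (fun t => g (- t)) t)
    by (intros; apply continuous_reflect_R; auto).
  rewrite (RInt_ext_R _ (fun t => / 2 * (g t + g (- t)))) by (intros; unfold Rdiv; ring).
  rewrite RInt_scal_R, RInt_plus_R, RInt_reflect by
    (auto; apply ex_RInt_R_continuous; auto; intros; apply continuous_plus_R; auto).
  field.
Qed.

Lemma upd_eq x k t : upd x k t k = t.
Proof. unfold upd. rewrite Nat.eqb_refl. reflexivity. Qed.

Lemma upd_neq x k t j : j <> k -> upd x k t j = x j.
Proof. intros H. unfold upd. destruct (Nat.eqb_spec j k); [lia|reflexivity]. Qed.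

Lemma sumR_ext k g g' : (forall i, (i < k)%nat -> g i = g' i) -> sumR k g = sumR k g'.
Proof.
  induction k; simpl; intros H; auto.
  rewrite IHk, H by (try intros; apply H || lia; lia). reflexivity.
Qed.

Lemma prodR_ext k g g' : (forall i, (i < k)%nat -> g i = g' i) -> prodR k g = prodR k g'.
Proof.
  induction k; simpl; intros H; auto.
  rewrite IHk, H by (try intros; apply H || lia; lia). reflexivity.
Qed.

Lemma sumR_ge0 k g : (forall i, (i < k)%nat -> 0 <= g i) -> 0 <= sumR k g.
Proof.
  induction k; simpl; intros H; [lra|].
  assert (0 <= g k) by (apply H; lia). assert (0 <= sumR k g) by (apply IHk; intros; apply H; lia). lra.
Qed.

Lemma sumR_ge_term k g i : (forall j, (j < k)%nat -> 0 <= g j) -> (i < k)%nat -> g i <= sumR k g.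
Proof.
  induction k; intros H Hi; [lia|]. simpl.
  assert (0 <= sumR k g) by (apply sumR_ge0; intros; apply H; lia).
  assert (0 <= g k) by (apply H; lia).
  destruct (Nat.eq_dec i k) as [->|hn]; [lra|].
  assert (g i <= sumR k g) by (apply IHk; [intros; apply H; lia| lia]). lra.
Qed.

Lemma prodR_ge0 k g : (forall i, (i < k)%nat -> 0 <= g i) -> 0 <= prodR k g.
Proof.
  induction k; intros H; simpl; [lra|].
  apply Rmult_le_pos; [apply IHk; intros; apply H|apply H]; lia.
Qed.

Lemma prodR_in_01 k g : (forall i, (i < k)%nat -> 0 <= g i <= 1) -> 0 <= prodR k g <= 1.
Proof.
  induction k; intros H; simpl; [lra|].
  destruct (IHk ltac:(intros; apply H; lia)). destruct (H k ltac:(lia)). split; nra.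
Qed.

Lemma sumR_zero k y : sumR k (fun i => 0 * y i ^ 2) = 0.
Proof. induction k; cbn [sumR]; [reflexivity| rewrite IHk; ring]. Qed.

Definition near_Rd (d : nat) (x x0 : nat -> R) (del : R) : Prop :=
  forall i, (i < d)%nat -> Rabs (x i - x0 i) < del.

Lemma near_Rd_refl d x del : 0 < del -> near_Rd d x x del.
Proof. intros h i _. rewrite Rminus_diag, Rabs_R0. exact h. Qed.

Lemma near_Rd_mono d x x0 a b : a <= b -> near_Rd d x x0 a -> near_Rd d x x0 b.
Proof. intros h H i Hi. specialize (H i Hi). lra. Qed.

Lemma near_Rd_upd d x x0 k t t0 del : Rabs (t - t0) < del -> near_Rd d x x0 del ->
  near_Rd d (upd x k t) (upd x0 k t0) del.
Proof. intros Ht Hx i Hi. unfold upd. destruct (Nat.eqb i k); auto. Qed.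

Lemma Rmult_eps_delta a0 b0 e : 0 < e -> exists del, 0 < del /\
  forall a b, Rabs (a - a0) < del -> Rabs (b - b0) < del -> Rabs (a * b - a0 * b0) < e.
Proof.
  intros He. set (K := Rabs a0 + Rabs b0 + 1).
  assert (HK : 1 <= K) by (unfold K; pose proof (Rabs_pos a0); pose proof (Rabs_pos b0); lra).
  exists (Rmin 1 (e / (2 * K))). split; [apply Rmin_glb_lt; [lra| apply Rdiv_lt_0_compat; lra]|].
  intros a b Ha Hb.
  assert (D1 : Rabs (a - a0) <= 1) by (left; eapply Rlt_le_trans; [exact Ha| apply Rmin_l]).
  assert (D2 : Rabs (a - a0) <= e / (2 * K)) by (left; eapply Rlt_le_trans; [exact Ha| apply Rmin_r]).
  assert (D3 : Rabs (b - b0) <= e / (2 * K)) by (left; eapply Rlt_le_trans; [exact Hb| apply Rmin_r]).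
  replace (a * b - a0 * b0) with ((a - a0) * (b - b0) + (a - a0) * b0 + a0 * (b - b0)) by ring.
  eapply Rle_lt_trans; [apply Rabs_triang|].
  eapply Rle_lt_trans; [apply Rplus_le_compat_r; apply Rabs_triang|]. rewrite !Rabs_mult.
  pose proof (Rabs_pos (a - a0)); pose proof (Rabs_pos (b - b0)).
  pose proof (Rabs_pos a0); pose proof (Rabs_pos b0).
  assert (e / (2 * K) * K = e / 2) by (field; lra).
  assert (Rabs (a - a0) * Rabs (b - b0) <= 1 * (e / (2 * K))) by (apply Rmult_le_compat; auto).
  assert (Rabs (a - a0) * Rabs b0 <= e / (2 * K) * Rabs b0) by (apply Rmult_le_compat_r; auto).
  assert (Rabs a0 * Rabs (b - b0) <= Rabs a0 * (e / (2 * K))) by (apply Rmult_le_compat_l; auto).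
  assert (e / (2 * K) * 1 + e / (2 * K) * Rabs b0 + Rabs a0 * (e / (2 * K)) = e / (2 * K) * K)
    by (unfold K; ring).
  nra.
Qed.

Lemma continuous_Rd_mult d G1 G2 : continuous_Rd d G1 -> continuous_Rd d G2 ->
  continuous_Rd d (fun y => G1 y * G2 y).
Proof.
  intros H1 H2 x eps He. destruct (Rmult_eps_delta (G1 x) (G2 x) eps He) as [d0 [Hd0 Hm]].
  destruct (H1 x d0 Hd0) as [d1 [Hd1 P1]]. destruct (H2 x d0 Hd0) as [d2 [Hd2 P2]].
  exists (Rmin d1 d2). split; [apply Rmin_glb_lt; auto|]. intros y Hy. apply Hm.
  - apply P1. intros i Hi. eapply Rlt_le_trans; [apply Hy; auto| apply Rmin_l].
  - apply P2. intros i Hi. eapply Rlt_le_trans; [apply Hy; auto| apply Rmin_r].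
Qed.

Lemma continuous_Rd_const d a : continuous_Rd d (fun _ => a).
Proof. intros x eps He. exists 1. split; [lra|]. intros. rewrite Rminus_diag, Rabs_R0. lra. Qed.

Lemma continuous_Rd_upd d G k t : continuous_Rd d G -> continuous_Rd d (fun y => G (upd y k t)).
Proof.
  intros H x eps He. destruct (H (upd x k t) eps He) as [d0 [Hd0 P]]. exists d0. split; auto.
  intros y Hy. apply P. intros i Hi. unfold upd. destruct (Nat.eqb i k); auto.
  rewrite Rminus_diag, Rabs_R0; auto.
Qed.

Lemma continuous_Rd_rho_coord d rho i : (i < d)%nat -> pos_cont_on_halfline rho ->
  continuous_Rd d (fun y => rho (Rabs (y i))).
Proof.
  intros Hi [_ Hc] x eps He. destruct (Hc (Rabs (x i)) eps (Rabs_pos _) He) as [d0 [Hd0 P]].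
  exists d0. split; auto. intros y Hy. apply P; [apply Rabs_pos|].
  eapply Rle_lt_trans; [apply Rabs_triang_inv2| apply Hy; auto].
Qed.

Lemma continuous_rho_abs rho t0 : pos_cont_on_halfline rho -> continuous (fun t => rho (Rabs t)) t0.
Proof.
  intros [_ Hc]. apply continuous_eps_delta. intros eps He.
  destruct (Hc (Rabs t0) eps (Rabs_pos _) He) as [dl [Hdl P]].
  exists dl. split; auto. intros y Hy. apply P; [apply Rabs_pos|].
  eapply Rle_lt_trans; [apply Rabs_triang_inv2| exact Hy].
Qed.

Section Density.
Variables (d : nat) (rho : nat -> R -> R).
Hypothesis Hrho : forall i, (i < d)%nat -> pos_cont_on_halfline (rho i).

Lemma continuous_Rd_density k : (k <= d)%nat -> continuous_Rd d (density k rho).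
Proof.
  induction k as [|k IH]; intros Hk; unfold density; simpl.
  - apply continuous_Rd_const.
  - apply (continuous_Rd_mult d (density k rho)); [apply IH; lia|].
    apply continuous_Rd_rho_coord, Hrho; lia.
Qed.

Lemma density_pos k y : (k <= d)%nat -> 0 < density k rho y.
Proof.
  induction k as [|k IH]; intros Hk; unfold density; simpl; [lra|].
  apply Rmult_lt_0_compat; [apply IH; lia|]. apply (Hrho k ltac:(lia)), Rabs_pos.
Qed.

Lemma density_ge0 k y : (k <= d)%nat -> 0 <= density k rho y.
Proof. intros. left. apply density_pos; auto. Qed.

End Density.

Lemma box_int_ext L k : forall F F' x x',
  (forall y y', (forall j, (j < k)%nat -> y j = y' j) -> (forall j, (k <= j)%nat -> y j = x j) ->
     (forall j, (k <= j)%nat -> y' j = x' j) -> F y = F' y') ->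
  box_int L k F x = box_int L k F' x'.
Proof.
  induction k as [|k IH]; intros F F' x x' H; simpl.
  - apply H; intros; try lia; reflexivity.
  - f_equal. apply functional_extensionality. intros t. apply IH.
    intros y y' H1 H2 H3. apply H.
    + intros j Hj. destruct (Nat.eq_dec j k) as [->|Hn].
      * rewrite (H2 k), (H3 k), !upd_eq by lia. reflexivity.
      * apply H1; lia.
    + intros j Hj. rewrite H2 by lia. apply upd_neq; lia.
    + intros j Hj. rewrite H3 by lia. apply upd_neq; lia.
Qed.

Lemma box_int_zero L k x : box_int L k (fun _ => 0) x = 0.
Proof.
  revert x; induction k as [|k IH]; intros x; simpl; auto.
  replace (fun t => box_int L k (fun _ => 0) (upd x k t)) with (fun _ : R => 0)
    by (apply functional_extensionality; intros; rewrite IH; reflexivity).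
  rewrite RI_RInt, RInt_const_R by (apply ex_RInt_R_continuous, continuous_const_R). ring.
Qed.

(* [ell_int L c G k r x] integrates [G] over the part of the cube [[-L,L]^k] (in the first
   [k] coordinates, the others being those of [x]) where [sum_(i<k) c i * y i ^ 2 <= r];
   with [c = 0] and [r = 1] it is the integral over the whole cube. *)
Definition ell_ind (c : nat -> R) (r : R) (k : nat) (y : nat -> R) : R :=
  if Rle_dec (sumR k (fun i => c i * y i ^ 2)) r then 1 else 0.

Definition ell_int (L : R) (c : nat -> R) (G : (nat -> R) -> R) (k : nat) (r : R)
  (x : nat -> R) : R :=
  box_int L k (fun y => G y * ell_ind c r k y) x.

Definition nonneg_coef (k : nat) (c : nat -> R) : Prop := forall i, (i < k)%nat -> 0 <= c i.

Lemma nonneg_coef_S k c : nonneg_coef (S k) c -> nonneg_coef k c.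
Proof. intros H i Hi. apply H. lia. Qed.

Lemma ell_int_neg_radius L c G k r x : nonneg_coef k c -> r < 0 -> ell_int L c G k r x = 0.
Proof.
  intros Hc Hr. unfold ell_int. rewrite <- (box_int_zero L k x). apply box_int_ext.
  intros y y' _ _ _. unfold ell_ind. destruct Rle_dec as [h|h]; [|ring].
  assert (0 <= sumR k (fun i => c i * y i ^ 2))
    by (apply sumR_ge0; intros i Hi; pose proof (Hc i Hi); pose proof (pow2_ge_0 (y i)); nra).
  lra.
Qed.

Lemma ell_int_S L c G k r x :
  ell_int L c G (S k) r x = RI (fun t => ell_int L c G k (r - c k * t ^ 2) (upd x k t)) (- L) L.
Proof.
  unfold ell_int. simpl. f_equal. apply functional_extensionality; intros t.
  apply box_int_ext. intros y y' H1 H2 H3.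
  replace y' with y.
  2:{ apply functional_extensionality; intros j. destruct (Nat.lt_ge_cases j k); auto.
      rewrite H2, H3 by lia. reflexivity. }
  f_equal. unfold ell_ind. simpl. rewrite (H2 k), upd_eq by lia.
  do 2 destruct Rle_dec; auto; lra.
Qed.

Lemma ell_int_indep L c G k r x x' :
  (forall y y', (forall j, (j < k)%nat -> y j = y' j) -> G y = G y') ->
  ell_int L c G k r x = ell_int L c G k r x'.
Proof.
  intros HG. unfold ell_int. apply box_int_ext. intros y y' H1 _ _.
  rewrite (HG y y' H1). unfold ell_ind.
  rewrite (sumR_ext k _ (fun i => c i * y' i ^ 2)) by (intros i Hi; rewrite H1; auto).
  reflexivity.
Qed.

Lemma ell_int_shift L c G k r x t t' :
  ell_int L c G k r (upd x k t') = ell_int L c (fun y => G (upd y k t')) k r (upd x k t).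
Proof.
  unfold ell_int. apply box_int_ext. intros y y' H1 H2 H3.
  replace y with (upd y' k t').
  2:{ apply functional_extensionality; intros j. destruct (Nat.lt_ge_cases j k) as [h|h].
      - rewrite upd_neq by lia. symmetry. apply H1; auto.
      - destruct (Nat.eq_dec j k) as [->|hn].
        + rewrite upd_eq, H2, upd_eq by lia. reflexivity.
        + rewrite upd_neq, H2, H3, !upd_neq by lia. reflexivity. }
  f_equal. unfold ell_ind.
  rewrite (sumR_ext k _ (fun i => c i * y' i ^ 2)) by (intros i Hi; rewrite upd_neq; auto; lia).
  reflexivity.
Qed.

Lemma ell_int_vanishing L c G k r x :
  (forall y, (forall j, (k <= j)%nat -> y j = x j) -> G y = 0) -> ell_int L c G k r x = 0.
Proof.
  intros HG. unfold ell_int. rewrite <- (box_int_zero L k x). apply box_int_ext.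
  intros y y' _ H2 _. rewrite HG by auto. ring.
Qed.

Definition half_width (L c r : R) : R := if Rle_dec c 0 then L else Rmin L (sqrt (r / c)).

Lemma half_width_bounds L c r : 0 <= L -> 0 <= half_width L c r <= L.
Proof.
  intros HL. unfold half_width. destruct Rle_dec; [lra|].
  split; [apply Rmin_glb; auto; apply sqrt_pos| apply Rmin_l].
Qed.

Lemma half_width_mono L c r1 r2 : r1 <= r2 -> half_width L c r1 <= half_width L c r2.
Proof.
  intros H. unfold half_width. destruct Rle_dec; [lra|].
  apply Rle_min_compat_l, sqrt_le_1_alt. unfold Rdiv.
  apply Rmult_le_compat_r; [left; apply Rinv_0_lt_compat|]; lra.
Qed.

Lemma half_width_continuous L c r0 eps : 0 <= r0 -> 0 < eps -> exists del, 0 < del /\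
  forall r, Rabs (r - r0) < del -> Rabs (half_width L c r - half_width L c r0) < eps.
Proof.
  intros Hr He. unfold half_width. destruct Rle_dec.
  - exists 1. split; [lra|]. intros. rewrite Rminus_diag, Rabs_R0. lra.
  - assert (Hc : continuity_pt (fun r => sqrt (r / c)) r0).
    { apply (continuity_pt_comp (fun r => r / c) sqrt).
      - apply continuity_pt_div; [apply continuity_pt_id| apply continuity_pt_const; intros ? ?; auto| lra].
      - apply continuity_pt_sqrt. apply Rle_mult_inv_pos; lra. }
    destruct (eps_delta_continuity_pt _ _ Hc eps He) as [dl [Hdl Hp]]. exists dl. split; auto.
    intros r Hrr. specialize (Hp r Hrr).
    unfold Rmin. do 2 destruct Rle_dec; split_Rabs; lra.
Qed.

Lemma half_width_spec L c r t : 0 <= c -> 0 <= r -> Rabs t <= L ->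
  (Rabs t <= half_width L c r <-> 0 <= r - c * t ^ 2).
Proof.
  intros Hc Hr HtL. unfold half_width. destruct Rle_dec.
  - replace c with 0 by lra. lra.
  - assert (Hq : 0 <= r / c) by (apply Rle_mult_inv_pos; lra).
    set (q := sqrt (r / c)). set (a := Rabs t) in *.
    assert (Hqq : q * q = r / c) by apply sqrt_sqrt, Hq.
    assert (E : r - c * t ^ 2 = c * (q * q - a * a)).
    { assert (Hat : a * a = t ^ 2) by (unfold a; rewrite <- pow2_abs; ring).
      rewrite Hat, Hqq. field. lra. }
    assert (Ha : 0 <= a) by apply Rabs_pos. assert (0 <= q) by apply sqrt_pos.
    rewrite E. assert (Hmin : a <= Rmin L q <-> a <= q).
    { unfold Rmin. destruct Rle_dec; split; intros; lra. }
    rewrite Hmin. split; intros Hle.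
    + apply Rmult_le_pos; nra.
    + apply Rnot_lt_le. intros Hlt. assert (q * q < a * a) by nra. nra.
Qed.

Definition continuous_rx (d : nat) (F : R -> (nat -> R) -> R) : Prop :=
  forall r0 x0 eps, 0 <= r0 -> 0 < eps -> exists del, 0 < del /\
    forall r x, 0 <= r -> Rabs (r - r0) < del -> near_Rd d x x0 del -> Rabs (F r x - F r0 x0) < eps.

Definition continuous_trx (d : nat) (H : R -> R -> (nat -> R) -> R) : Prop :=
  forall t0 r0 x0 eps, 0 <= r0 -> 0 < eps -> exists del, 0 < del /\
    forall t r x, 0 <= r -> Rabs (t - t0) < del -> Rabs (r - r0) < del -> near_Rd d x x0 del ->
      Rabs (H t r x - H t0 r0 x0) < eps.

Lemma continuous_rx_ext d F F' :
  (forall r x, 0 <= r -> F r x = F' r x) -> continuous_rx d F -> continuous_rx d F'.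
Proof.
  intros E H r0 x0 eps Hr0 He. destruct (H r0 x0 eps Hr0 He) as [del [Hd Hp]].
  exists del; split; auto. intros r x Hr Hrr Hx. rewrite <- !E by auto. apply Hp; auto.
Qed.

Lemma continuous_rx_upd d F k r x t0 : continuous_rx d F -> 0 <= r ->
  continuous (fun t => F r (upd x k t)) t0.
Proof.
  intros HF Hr. apply continuous_eps_delta. intros eps He.
  destruct (HF r (upd x k t0) eps Hr He) as [dl [Hdl P]].
  exists dl. split; auto. intros y Hy. apply P; auto.
  - rewrite Rminus_diag, Rabs_R0; auto.
  - apply near_Rd_upd; auto. apply near_Rd_refl; auto.
Qed.

Section ContinuousTRX.
Variables (d : nat) (H : R -> R -> (nat -> R) -> R).
Hypothesis HH : continuous_trx d H.

Lemma continuous_trx_t r x t0 : 0 <= r -> continuous (fun t => H t r x) t0.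
Proof.
  intros Hr. apply continuous_eps_delta. intros eps He.
  destruct (HH t0 r x eps Hr He) as [del [Hd Hp]]. exists del; split; auto.
  intros t Ht. apply Hp; auto; [rewrite Rminus_diag, Rabs_R0; auto| apply near_Rd_refl; auto].
Qed.

(* By compactness of [[a,b]], the modulus of continuity at [(r0, x0)] can be taken uniform in [t]. *)
Lemma continuous_trx_uniform a b r0 x0 eps : a <= b -> 0 <= r0 -> 0 < eps -> exists del, 0 < del /\
  forall t r x, a <= t <= b -> 0 <= r -> Rabs (r - r0) < del -> near_Rd d x x0 del ->
    Rabs (H t r x - H t r0 x0) < eps.
Proof.
  intros Hab Hr0 He.
  assert (X : forall t, {dl : posreal | forall t' r x, 0 <= r -> Rabs (t' - t) < dl ->
      Rabs (r - r0) < dl -> near_Rd d x x0 dl -> Rabs (H t' r x - H t r0 x0) < eps / 2}).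
  { intros t. apply constructive_indefinite_description.
    destruct (HH t r0 x0 (eps / 2) Hr0 ltac:(lra)) as [dl [Hdl Hp]].
    exists (mkposreal dl Hdl). exact Hp. }
  destruct (compactness_value_1d a b (fun t => proj1_sig (X t))) as [dd Hdd].
  exists dd. split; [apply cond_pos|].
  intros t r x Ht Hr Hrr Hx. specialize (Hdd t Ht).
  apply NNPP; intro Hneg; apply Hdd; intros [t' [Ht' [H1 H2]]]. apply Hneg.
  destruct (X t') as [dl Hp]; simpl in *.
  assert (A1 := Hp t r x Hr H1 ltac:(lra) (near_Rd_mono d x x0 dd dl H2 Hx)).
  assert (A2 := Hp t r0 x0 Hr0 H1 ltac:(rewrite Rminus_diag, Rabs_R0; apply cond_pos)
    (near_Rd_refl d x0 dl (cond_pos dl))).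
  replace (H t r x - H t r0 x0) with ((H t r x - H t' r0 x0) - (H t r0 x0 - H t' r0 x0)) by ring.
  eapply Rle_lt_trans; [apply Rabs_triang|]. rewrite Rabs_Ropp. lra.
Qed.

Lemma continuous_trx_bounded a b r0 x0 : a <= b -> 0 <= r0 ->
  exists M, 0 <= M /\ forall t, a <= t <= b -> Rabs (H t r0 x0) <= M.
Proof.
  intros Hab Hr.
  destruct (continuity_ab_maj (fun t => Rabs (H t r0 x0)) a b Hab) as [Mx [HM _]].
  { intros c _. apply (continuity_pt_comp (fun t => H t r0 x0) Rabs); [|apply Rcontinuity_abs].
    apply continuity_pt_filterlim, continuous_trx_t; auto. }
  exists (Rabs (H Mx r0 x0)). split; [apply Rabs_pos| exact HM].
Qed.

End ContinuousTRX.

Lemma RInt_sym_moving_bound (h1 h0 : R -> R) s1 s0 L e M : 0 <= s1 <= L -> 0 <= s0 <= L ->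
  (forall t, continuous h1 t) -> (forall t, continuous h0 t) ->
  (forall t, - L <= t <= L -> Rabs (h1 t - h0 t) <= e) -> (forall t, - L <= t <= L -> Rabs (h0 t) <= M) ->
  Rabs (RInt h1 (- s1) s1 - RInt h0 (- s0) s0) <= 2 * L * e + 2 * (Rabs (s1 - s0) * M).
Proof.
  intros Hs1 Hs0 C1 C0 He HM.
  assert (Ex : forall (h : R -> R) u v, (forall t, continuous h t) -> ex_RInt_R h u v)
    by (intros; apply ex_RInt_R_continuous; auto).
  assert (C10 : forall t, continuous (fun t => h1 t - h0 t) t)
    by (intros; apply (continuous_minus h1 h0); auto).
  assert (E : RInt h1 (- s1) s1 - RInt h0 (- s0) s0 =
    RInt (fun t => h1 t - h0 t) (- s1) s1 + (RInt h0 (- s1) (- s0) + RInt h0 s0 s1)).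
  { rewrite RInt_minus_R by auto.
    rewrite <- (RInt_Chasles_R h0 (- s1) (- s0) s1), <- (RInt_Chasles_R h0 (- s0) s0 s1) by auto.
    ring. }
  assert (Hin : forall u v t, - L <= u <= L -> - L <= v <= L -> Rmin u v <= t <= Rmax u v -> - L <= t <= L).
  { intros u v t Hu Hv Ht. unfold Rmin, Rmax in Ht. destruct Rle_dec; lra. }
  assert (T1 : Rabs (RInt (fun t => h1 t - h0 t) (- s1) s1) <= Rabs (s1 - - s1) * e)
    by (apply abs_RInt_le_const_R; auto; intros t Ht; apply He, (Hin (- s1) s1); [split; lra| split; lra| exact Ht]).
  assert (T2 : Rabs (RInt h0 (- s1) (- s0)) <= Rabs (- s0 - - s1) * M)
    by (apply abs_RInt_le_const_R; auto; intros t Ht; apply HM, (Hin (- s1) (- s0)); [split; lra| split; lra| exact Ht]).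
  assert (T3 : Rabs (RInt h0 s0 s1) <= Rabs (s1 - s0) * M)
    by (apply abs_RInt_le_const_R; auto; intros t Ht; apply HM, (Hin s0 s1); [split; lra| split; lra| exact Ht]).
  replace (- s0 - - s1) with (s1 - s0) in T2 by ring.
  rewrite (Rabs_right (s1 - - s1)) in T1 by lra.
  assert (0 <= e) by (specialize (He 0 ltac:(lra)); pose proof (Rabs_pos (h1 0 - h0 0)); lra).
  assert ((s1 - - s1) * e <= 2 * L * e) by (apply Rmult_le_compat_r; lra).
  rewrite E. eapply Rle_trans; [apply Rabs_triang|].
  eapply Rle_trans; [apply Rplus_le_compat_l, Rabs_triang|]. lra.
Qed.

Lemma continuous_rx_RInt_sym d H s L : 0 <= L -> continuous_trx d H ->
  (forall r, 0 <= r -> 0 <= s r <= L) ->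
  (forall r0 eps, 0 <= r0 -> 0 < eps -> exists del, 0 < del /\
     forall r, Rabs (r - r0) < del -> Rabs (s r - s r0) < eps) ->
  continuous_rx d (fun r x => RInt (fun t => H t r x) (- s r) (s r)).
Proof.
  intros HL Hc Hsb Hs r0 x0 eps Hr0 He.
  destruct (continuous_trx_bounded d H Hc (- L) L r0 x0 ltac:(lra) Hr0) as [M [HM0 HM]].
  set (e := eps / (4 * (L + 1))).
  assert (He' : 0 < e) by (apply Rdiv_lt_0_compat; lra).
  destruct (continuous_trx_uniform d H Hc (- L) L r0 x0 e ltac:(lra) Hr0 He') as [d1 [Hd1 Hunif]].
  destruct (Hs r0 (eps / (4 * (M + 1))) Hr0 ltac:(apply Rdiv_lt_0_compat; lra)) as [d2 [Hd2 Hsp]].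
  exists (Rmin d1 d2). split; [apply Rmin_glb_lt; auto|].
  intros r x Hr Hrr Hx.
  pose proof (Rmin_l d1 d2). pose proof (Rmin_r d1 d2).
  specialize (Hsp r ltac:(lra)).
  eapply Rle_lt_trans.
  { apply (RInt_sym_moving_bound _ _ _ _ L e M); auto; try (intros; apply (continuous_trx_t d H); auto).
    intros t Ht. left. apply Hunif; auto; [lra| eapply near_Rd_mono; [|exact Hx]; lra]. }
  assert (Q1 : 2 * L * e < eps / 2).
  { unfold e. apply (Rmult_lt_reg_r (4 * (L + 1))); [lra|].
    replace (2 * L * (eps / (4 * (L + 1))) * (4 * (L + 1))) with (2 * L * eps) by (field; lra). nra. }
  assert (Q2 : Rabs (s r - s r0) * M <= eps / (4 * (M + 1)) * M) by (apply Rmult_le_compat_r; lra).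
  assert (Q3 : eps / (4 * (M + 1)) * M < eps / 4).
  { apply (Rmult_lt_reg_r (4 * (M + 1))); [lra|].
    replace (eps / (4 * (M + 1)) * M * (4 * (M + 1))) with (eps * M) by (field; lra). nra. }
  lra.
Qed.

(* Clipping the radius at [0] keeps slices continuous in [t]; the clip is inactive on the range
   of the outer integral (see [ell_int_S_slices]). *)
Definition slice_int (L : R) (c : nat -> R) (G : (nat -> R) -> R) (k : nat) (t r : R)
  (x : nat -> R) : R :=
  ell_int L c G k (Rmax (r - c k * t ^ 2) 0) (upd x k t).

Lemma radius_shift_continuous c t0 r0 e : 0 < e -> exists del, 0 < del /\
  forall t r, Rabs (t - t0) < del -> Rabs (r - r0) < del ->
    Rabs ((r - c * t ^ 2) - (r0 - c * t0 ^ 2)) < e.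
Proof.
  intros He. set (K := 1 + Rabs c * (2 * Rabs t0 + 1)).
  assert (HK : 1 <= K) by (unfold K; pose proof (Rabs_pos c); pose proof (Rabs_pos t0); nra).
  exists (Rmin 1 (e / (2 * K))). split; [apply Rmin_glb_lt; [lra| apply Rdiv_lt_0_compat; lra]|].
  intros t r Ht Hr.
  assert (D1 : Rabs (t - t0) < 1) by (eapply Rlt_le_trans; [exact Ht| apply Rmin_l]).
  assert (D2 : Rabs (t - t0) < e / (2 * K)) by (eapply Rlt_le_trans; [exact Ht| apply Rmin_r]).
  assert (D3 : Rabs (r - r0) < e / (2 * K)) by (eapply Rlt_le_trans; [exact Hr| apply Rmin_r]).
  replace ((r - c * t ^ 2) - (r0 - c * t0 ^ 2)) with ((r - r0) - c * ((t - t0) * (t + t0))) by ring.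
  eapply Rle_lt_trans; [apply Rabs_triang|]. rewrite Rabs_Ropp, !Rabs_mult.
  assert (Tt : Rabs (t + t0) <= 2 * Rabs t0 + 1).
  { replace (t + t0) with ((t - t0) + 2 * t0) by ring. eapply Rle_trans; [apply Rabs_triang|].
    rewrite Rabs_mult, (Rabs_right 2) by lra. lra. }
  pose proof (Rabs_pos c). pose proof (Rabs_pos (t - t0)). pose proof (Rabs_pos (t + t0)).
  assert (Hm : Rabs c * (Rabs (t - t0) * Rabs (t + t0)) <= Rabs c * (2 * Rabs t0 + 1) * (e / (2 * K))).
  { rewrite Rmult_assoc. apply Rmult_le_compat_l; auto.
    rewrite Rmult_comm. apply Rmult_le_compat; auto; lra. }
  assert (e / (2 * K) + Rabs c * (2 * Rabs t0 + 1) * (e / (2 * K)) = e / 2)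
    by (unfold K; field; pose proof (Rabs_pos t0); nra).
  lra.
Qed.

Lemma continuous_rx_ell_int_0 L c G d : continuous_Rd d G -> continuous_rx d (ell_int L c G 0).
Proof.
  intros HG r0 x0 eps Hr0 He. destruct (HG x0 eps He) as [del [Hd Hp]].
  exists del. split; auto. intros r x Hr _ Hx. unfold ell_int, ell_ind; simpl.
  do 2 (destruct Rle_dec; [|lra]). rewrite !Rmult_1_r. apply Hp, Hx.
Qed.

Lemma continuous_trx_slice_int L c G d k : (k < d)%nat ->
  continuous_rx d (ell_int L c G k) -> continuous_trx d (slice_int L c G k).
Proof.
  intros Hk HA t0 r0 x0 eps Hr0 He.
  destruct (HA (Rmax (r0 - c k * t0 ^ 2) 0) (upd x0 k t0) eps ltac:(apply Rmax_r) He) as [d1 [Hd1 Hp]].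
  destruct (radius_shift_continuous (c k) t0 r0 d1 Hd1) as [d2 [Hd2 Hq]].
  exists (Rmin d1 d2). split; [apply Rmin_glb_lt; auto|].
  pose proof (Rmin_l d1 d2). pose proof (Rmin_r d1 d2).
  intros t r x Hr Ht Hrr Hx. unfold slice_int. apply Hp.
  - apply Rmax_r.
  - specialize (Hq t r ltac:(lra) ltac:(lra)).
    unfold Rmax. do 2 destruct Rle_dec; split_Rabs; lra.
  - apply near_Rd_upd; [lra| eapply near_Rd_mono; [|exact Hx]; lra].
Qed.

Lemma ell_int_S_slices L c G d k r x : 0 <= L -> nonneg_coef (S k) c ->
  continuous_trx d (slice_int L c G k) -> 0 <= r ->
  ell_int L c G (S k) r x =
    RInt (fun t => slice_int L c G k t r x) (- half_width L (c k) r) (half_width L (c k) r).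
Proof.
  intros HL Hc HH Hr. rewrite ell_int_S.
  assert (Hck : 0 <= c k) by (apply Hc; lia).
  pose proof (half_width_bounds L (c k) r HL).
  apply RI_of_supported.
  - auto.
  - intros t Ht. unfold slice_int. rewrite Rmax_left; auto.
    apply Rge_le, Rle_ge, (half_width_spec L); auto; apply Rabs_le; lra.
  - intros t Ht. apply ell_int_neg_radius; [apply nonneg_coef_S; auto|].
    destruct (Rlt_le_dec (r - c k * t ^ 2) 0) as [Hneg|Hin]; auto.
    apply (half_width_spec L) in Hin; auto; lra.
  - intros t. apply (continuous_trx_t d); auto.
Qed.

Lemma continuous_rx_ell_int L c G d : 0 <= L -> nonneg_coef d c -> continuous_Rd d G ->
  forall k, (k <= d)%nat -> continuous_rx d (ell_int L c G k).
Proof.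
  intros HL Hc HG. induction k as [|k IH]; intros Hk.
  - apply continuous_rx_ell_int_0; auto.
  - assert (HH : continuous_trx d (slice_int L c G k))
      by (apply continuous_trx_slice_int; [lia| apply IH; lia]).
    apply (continuous_rx_ext d (fun r x => RInt (fun t => slice_int L c G k t r x)
      (- half_width L (c k) r) (half_width L (c k) r))).
    + intros r x Hr. symmetry. apply (ell_int_S_slices L c G d); auto.
      intros i Hi; apply Hc; lia.
    + apply (continuous_rx_RInt_sym d _ _ L); auto.
      * intros; apply half_width_bounds; auto.
      * intros; apply half_width_continuous; auto.
Qed.

Section EllInt.
Variables (L : R) (d : nat) (c : nat -> R).
Hypothesis HL : 0 <= L.
Hypothesis Hc : nonneg_coef d c.

Lemma nonneg_coef_le k : (k <= d)%nat -> nonneg_coef k c.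
Proof. intros Hk i Hi. apply Hc. lia. Qed.

Lemma slice_int_continuous G k r x t0 : continuous_Rd d G -> (k < d)%nat -> 0 <= r ->
  continuous (fun t => slice_int L c G k t r x) t0.
Proof.
  intros. apply (continuous_trx_t d); auto.
  apply continuous_trx_slice_int, continuous_rx_ell_int; auto; lia.
Qed.

Lemma ex_RInt_slice_int G k r x a b : continuous_Rd d G -> (k < d)%nat -> 0 <= r ->
  ex_RInt_R (fun t => slice_int L c G k t r x) a b.
Proof. intros. apply ex_RInt_R_continuous. intros; apply slice_int_continuous; auto. Qed.

Lemma ell_int_S_eq G k r x : continuous_Rd d G -> (S k <= d)%nat -> 0 <= r ->
  ell_int L c G (S k) r x =
    RInt (fun t => slice_int L c G k t r x) (- half_width L (c k) r) (half_width L (c k) r).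
Proof.
  intros HG Hk Hr. apply (ell_int_S_slices L c G d); auto.
  - apply nonneg_coef_le; auto.
  - apply continuous_trx_slice_int, continuous_rx_ell_int; auto; lia.
Qed.

Lemma ell_int_ge0 G : continuous_Rd d G -> (forall y, 0 <= G y) ->
  forall k, (k <= d)%nat -> forall r x, 0 <= ell_int L c G k r x.
Proof.
  intros HG Hp. induction k as [|k IH]; intros Hk r x.
  - unfold ell_int, ell_ind; simpl. destruct Rle_dec; [rewrite Rmult_1_r; auto| lra].
  - destruct (Rlt_le_dec r 0) as [Hr|Hr].
    + rewrite ell_int_neg_radius; [lra| apply nonneg_coef_le; auto| auto].
    + rewrite ell_int_S_eq by auto. pose proof (half_width_bounds L (c k) r HL).
      apply RInt_ge_0; [lra| apply ex_RInt_slice_int; auto; lia|].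
      intros t _. apply IH. lia.
Qed.

Lemma ell_int_mono G1 G2 : continuous_Rd d G1 -> continuous_Rd d G2 -> (forall y, 0 <= G1 y) ->
  (forall y, G1 y <= G2 y) ->
  forall k, (k <= d)%nat -> forall r1 r2 x, r1 <= r2 -> ell_int L c G1 k r1 x <= ell_int L c G2 k r2 x.
Proof.
  intros HG1 HG2 Hp Hle. assert (Hp2 : forall y, 0 <= G2 y) by (intros y; specialize (Hp y); specialize (Hle y); lra).
  induction k as [|k IH]; intros Hk r1 r2 x Hr.
  - unfold ell_int, ell_ind; simpl. specialize (Hp x); specialize (Hp2 x); specialize (Hle x).
    do 2 destruct Rle_dec; lra.
  - destruct (Rlt_le_dec r1 0) as [H1|H1].
    + rewrite ell_int_neg_radius by (auto; apply nonneg_coef_le; auto). apply ell_int_ge0; auto.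
    + rewrite !ell_int_S_eq by (auto; lra).
      pose proof (half_width_bounds L (c k) r1 HL). pose proof (half_width_bounds L (c k) r2 HL).
      pose proof (half_width_mono L (c k) r1 r2 Hr).
      set (s1 := half_width L (c k) r1) in *. set (s2 := half_width L (c k) r2) in *.
      assert (Ex : forall a b, ex_RInt_R (fun t => slice_int L c G2 k t r2 x) a b)
        by (intros; apply ex_RInt_slice_int; auto; try lia; lra).
      assert (Pos : forall a b, a <= b -> 0 <= RInt (fun t => slice_int L c G2 k t r2 x) a b)
        by (intros; apply RInt_ge_0; auto; intros; apply ell_int_ge0; auto; try lia; lra).
      apply Rle_trans with (RInt (fun t => slice_int L c G2 k t r2 x) (- s1) s1).
      * apply RInt_le; [lra| apply ex_RInt_slice_int; auto; lia| auto|].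
        intros t _. apply IH; [lia|]. assert (0 <= c k) by (apply Hc; lia).
        unfold Rmax. do 2 destruct Rle_dec; nra.
      * rewrite <- (RInt_Chasles_R _ (- s2) (- s1) s2), <- (RInt_Chasles_R _ (- s1) s1 s2) by auto.
        pose proof (Pos (- s2) (- s1) ltac:(lra)). pose proof (Pos s1 s2 ltac:(lra)). lra.
Qed.

Definition depends_only_from (k : nat) (b : (nat -> R) -> R) : Prop :=
  forall y y', (forall j, (k <= j)%nat -> y j = y' j) -> b y = b y'.

Lemma ell_int_scal G b : continuous_Rd d G -> continuous_Rd d (fun y => G y * b y) ->
  forall k, (k <= d)%nat -> depends_only_from k b ->
  forall r x, ell_int L c (fun y => G y * b y) k r x = ell_int L c G k r x * b x.
Proof.
  intros HG HGb. induction k as [|k IH]; intros Hk Hb r x.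
  - unfold ell_int; simpl. ring.
  - destruct (Rlt_le_dec r 0) as [H1|H1].
    + rewrite !ell_int_neg_radius by (auto; apply nonneg_coef_le; auto). ring.
    + rewrite !ell_int_S_eq by auto.
      rewrite (RInt_ext_R _ (fun t => b x * slice_int L c G k t r x)).
      * rewrite RInt_scal_R; [ring| apply ex_RInt_slice_int; auto; lia].
      * intros t. unfold slice_int. rewrite IH; [| lia|].
        -- rewrite Rmult_comm. f_equal. apply Hb. intros j Hj. rewrite upd_neq; auto; lia.
        -- intros y y' Hy. apply Hb. intros j Hj. apply Hy. lia.
Qed.

End EllInt.

Lemma ell_int_cube_supported d L L' c G K : 0 <= K -> K <= L -> K <= L' -> nonneg_coef d c ->
  continuous_Rd d G -> (forall y, (exists i, (i < d)%nat /\ K < Rabs (y i)) -> G y = 0) ->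
  forall k, (k <= d)%nat -> forall r x, ell_int L c G k r x = ell_int L' c G k r x.
Proof.
  intros HK HL HL' Hc HG Hz. induction k as [|k IH]; intros Hk r x; [reflexivity|].
  destruct (Rlt_le_dec r 0) as [Hr|Hr].
  { rewrite !ell_int_neg_radius by (auto; apply (nonneg_coef_le d); auto). reflexivity. }
  rewrite (ell_int_S_eq L d), (ell_int_S_eq L' d) by (auto; lra).
  replace (fun t => slice_int L c G k t r x) with (fun t => slice_int L' c G k t r x)
    by (apply functional_extensionality; intros t; unfold slice_int; symmetry; apply IH; lia).
  assert (Hcont : forall t, continuous (fun t => slice_int L' c G k t r x) t)
    by (intros; apply (slice_int_continuous L' d); auto; lra).
  assert (Hzero : forall t, K < Rabs t -> slice_int L' c G k t r x = 0).
  { intros t Ht. apply ell_int_vanishing. intros y Hy. apply Hz. exists k. split; [lia|].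
    rewrite Hy, upd_eq by lia. exact Ht. }
  assert (Hcut : forall s s', K <= s -> K <= s' ->
    RInt (fun t => slice_int L' c G k t r x) (- s) s =
    RInt (fun t => slice_int L' c G k t r x) (- s') s' :> R).
  { intros s s' Hs Hs'. rewrite !(RInt_sym_cut _ K s), !(RInt_sym_cut _ K s'); auto. }
  unfold half_width. destruct Rle_dec; [apply Hcut; auto|].
  set (q := sqrt (r / c k)). destruct (Rle_dec K q).
  - apply Hcut; apply Rmin_glb; auto.
  - rewrite !Rmin_right by lra. reflexivity.
Qed.

Lemma ell_int_cube_contains_ellipsoid d L L' c G : 0 <= L -> 0 <= L' ->
  (forall i, (i < d)%nat -> 0 < c i) ->
  (forall i r, (i < d)%nat -> 0 <= r <= 1 -> sqrt (r / c i) <= L /\ sqrt (r / c i) <= L') ->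
  continuous_Rd d G ->
  forall k, (k <= d)%nat -> forall r x, r <= 1 -> ell_int L c G k r x = ell_int L' c G k r x.
Proof.
  intros HL HL' Hc Hq HG. assert (Hc' : nonneg_coef d c) by (intros i Hi; left; auto).
  induction k as [|k IH]; intros Hk r x Hr1; [reflexivity|].
  destruct (Rlt_le_dec r 0) as [Hr|Hr].
  { rewrite !ell_int_neg_radius by (auto; apply (nonneg_coef_le d); auto). reflexivity. }
  rewrite (ell_int_S_eq L d), (ell_int_S_eq L' d) by auto.
  assert (Hck : 0 < c k) by (apply Hc; lia).
  replace (half_width L' (c k) r) with (half_width L (c k) r).
  - apply RInt_ext. intros t _. unfold slice_int. apply IH; [lia|].
    pose proof (pow2_ge_0 t). unfold Rmax. destruct Rle_dec; nra.
  - destruct (Hq k r ltac:(lia) ltac:(lra)). unfold half_width.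
    destruct Rle_dec; [lra|]. rewrite !Rmin_right by lra. reflexivity.
Qed.

Definition radially_nonincreasing (L : R) (g : R -> R) : Prop :=
  forall t t', Rabs t <= Rabs t' <= L -> g t' <= g t.

(* Two functions that are both nonincreasing in [|t|] are comonotone, so the sign change of
   [g - C] happens at a level [k] of [psi]. *)
Lemma comonotone_threshold (g psi : R -> R) L C : 0 <= L ->
  radially_nonincreasing L g -> radially_nonincreasing L psi ->
  exists k, forall t, Rabs t <= L -> 0 <= (g t - C) * (psi t - k).
Proof.
  intros HL Hg Hpsi.
  destruct (classic (exists t, Rabs t <= L /\ g t < C)) as [[t0 Ht0]|Hn].
  - set (E := fun u => exists t, Rabs t <= L /\ g t < C /\ u = psi t).
    assert (HE : bound E).
    { exists (psi 0). intros u [t [Ht [_ ->]]]. apply Hpsi. rewrite Rabs_R0. split; [apply Rabs_pos| auto]. }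
    destruct (completeness E HE (ex_intro _ (psi t0) (ex_intro _ t0 (conj (proj1 Ht0)
      (conj (proj2 Ht0) eq_refl))))) as [k [Hub Hlub]].
    exists k. intros t Ht. destruct (Rtotal_order (g t) C) as [h|[h|h]].
    + assert (psi t <= k) by (apply Hub; exists t; auto). nra.
    + rewrite h. lra.
    + assert (k <= psi t).
      { apply Hlub. intros u [t' [Ht' [h' ->]]]. apply Hpsi. split; auto.
        destruct (Rle_lt_dec (Rabs t) (Rabs t')) as [h2|h2]; auto.
        assert (g t <= g t') by (apply Hg; lra). lra. }
      nra.
  - exists (psi L). intros t Ht.
    assert (C <= g t) by (apply Rnot_lt_le; intros h; apply Hn; exists t; auto).
    assert (psi L <= psi t) by (apply Hpsi; rewrite (Rabs_right L) by lra; lra). nra.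
Qed.

Lemma continuous_lin2 (f1 f2 : R -> R) a b t : continuous f1 t -> continuous f2 t ->
  continuous (fun t => a * f1 t + b * f2 t) t.
Proof.
  intros. apply continuous_plus_R; apply continuous_mult_R; auto; apply continuous_const_R.
Qed.

Lemma RInt_lin2 (f1 f2 : R -> R) a b u v :
  (forall t, continuous f1 t) -> (forall t, continuous f2 t) ->
  RInt (fun t => a * f1 t + b * f2 t) u v = a * RInt f1 u v + b * RInt f2 u v :> R.
Proof.
  intros H1 H2. rewrite RInt_plus_R, !RInt_scal_R; auto;
    apply ex_RInt_R_continuous; intros; auto; apply continuous_mult_R; auto; apply continuous_const_R.
Qed.

(* Chebyshev's integral inequality for the weight [w] and the comonotone pair [psi],
   [phi 1_[-s,s]]. *)
Lemma chebyshev_radial (w psi phi : R -> R) L s : 0 <= s <= L ->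
  (forall t, continuous w t) -> (forall t, continuous psi t) -> (forall t, continuous phi t) ->
  (forall t, 0 <= w t) -> radially_nonincreasing L psi -> radially_nonincreasing s phi ->
  (forall t, Rabs t <= s -> 0 <= phi t) ->
  RInt w (- L) L * RInt (fun t => psi t * phi t * w t) (- s) s >=
  RInt (fun t => psi t * w t) (- L) L * RInt (fun t => phi t * w t) (- s) s.
Proof.
  intros Hs Cw Cp Cf Hw Hpsi Hphi Hphi0.
  assert (HO : 0 <= RInt w (- L) L) by (apply RInt_ge_0; [lra| apply ex_RInt_R_continuous; auto| auto]).
  set (Om := RInt w (- L) L) in *.
  set (Ph := RInt (fun t => phi t * w t) (- s) s).
  set (Pb := fun t => if Rle_dec (Rabs t) s then phi t else 0).
  destruct (comonotone_threshold (fun t => Om * Pb t) psi L Ph) as [k Hk]; auto; [lra| |].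
  { intros t t' H. apply Rmult_le_compat_l; auto. unfold Pb.
    destruct (Rle_dec (Rabs t') s), (Rle_dec (Rabs t) s); try lra; [apply Hphi| apply Hphi0]; auto; lra. }
  assert (Cpw : forall t, continuous (fun t => psi t * w t) t) by (intros; apply continuous_mult_R; auto).
  assert (Cfw : forall t, continuous (fun t => phi t * w t) t) by (intros; apply continuous_mult_R; auto).
  assert (Cpfw : forall t, continuous (fun t => psi t * phi t * w t) t)
    by (intros; apply continuous_mult_R; auto; apply continuous_mult_R; auto).
  assert (Cout : forall t, continuous (fun t => (- Ph) * (psi t * w t) + (k * Ph) * w t) t)
    by (intros; apply continuous_lin2; auto).
  assert (Cin : forall t, continuous (fun t => Om * (psi t * phi t * w t) + (- k * Om) * (phi t * w t)) t)
    by (intros; apply continuous_lin2; auto).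
  assert (Inner : 0 <= RInt (fun t => (Om * (psi t * phi t * w t) + (- k * Om) * (phi t * w t)) +
                                      ((- Ph) * (psi t * w t) + (k * Ph) * w t)) (- s) s).
  { apply RInt_ge_0; [lra| apply ex_RInt_R_continuous; intros; apply continuous_plus_R; auto|].
    intros t Ht. specialize (Hk t ltac:(apply Rabs_le; lra)). unfold Pb in Hk.
    destruct Rle_dec as [_|h]; [|exfalso; apply h, Rabs_le; lra].
    pose proof (Hw t). replace (_ + _) with (((Om * phi t - Ph) * (psi t - k)) * w t) by ring.
    apply Rmult_le_pos; auto. }
  assert (Outer : forall u v, u <= v -> (forall t, u < t < v -> s < Rabs t <= L) ->
     0 <= RInt (fun t => (- Ph) * (psi t * w t) + (k * Ph) * w t) u v).
  { intros u v Huv Hin. apply RInt_ge_0; auto.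
    - apply ex_RInt_R_continuous; auto.
    - intros t Ht. destruct (Hin t Ht) as [h1 h2]. specialize (Hk t h2). unfold Pb in Hk.
      destruct Rle_dec as [h|_]; [lra|]. pose proof (Hw t).
      replace (_ + _) with (((Om * 0 - Ph) * (psi t - k)) * w t) by ring. apply Rmult_le_pos; auto. }
  pose proof (Outer (- L) (- s) ltac:(lra) ltac:(intros t Ht; rewrite Rabs_left by lra; lra)) as Left.
  pose proof (Outer s L ltac:(lra) ltac:(intros t Ht; rewrite Rabs_right by lra; lra)) as Right.
  rewrite RInt_plus_R, !RInt_lin2 in Inner by (auto; apply ex_RInt_R_continuous; auto).
  rewrite RInt_lin2 in Left, Right by auto.
  rewrite (RInt_sym_split (fun t => psi t * w t) s L Hs Cpw).
  assert (HOm : Om = RInt w (- L) (- s) + RInt w (- s) s + RInt w s L) by (apply RInt_sym_split; auto).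
  fold Ph in Inner. rewrite HOm in Inner |- *. lra.
Qed.

Definition unimodal_on (L : R) (psi : R -> R) : Prop :=
  forall t t', 0 <= t <= t' -> t' <= L -> psi t' <= psi t /\ psi (- t') <= psi (- t).

(* For an even weight, [psi] may be replaced by its even part, which is radially nonincreasing. *)
Lemma chebyshev_unimodal (w psi phi : R -> R) L s : 0 <= s <= L ->
  (forall t, continuous w t) -> (forall t, continuous psi t) -> (forall t, continuous phi t) ->
  (forall t, 0 <= w t) -> (forall t, w (- t) = w t) -> unimodal_on L psi ->
  radially_nonincreasing s phi -> (forall t, Rabs t <= s -> 0 <= phi t) ->
  RInt w (- L) L * RInt (fun t => psi t * phi t * w t) (- s) s >=
  RInt (fun t => psi t * w t) (- L) L * RInt (fun t => phi t * w t) (- s) s.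
Proof.
  intros Hs Cw Cp Cf Hw Hws Hpsi Hphi Hphi0.
  set (ps := fun t => (psi t + psi (- t)) / 2).
  assert (Cps : forall t, continuous ps t).
  { intros t. apply (continuous_mult_R (fun t => psi t + psi (- t)) (fun _ => / 2)); [|apply continuous_const_R].
    apply continuous_plus_R; auto. apply continuous_reflect_R; auto. }
  assert (Hps : radially_nonincreasing L ps).
  { assert (E : forall t, ps t = (psi (Rabs t) + psi (- Rabs t)) / 2).
    { intros t. unfold ps. destruct (Rle_lt_dec 0 t).
      - rewrite Rabs_right by lra. reflexivity.
      - rewrite Rabs_left, Ropp_involutive by lra. lra. }
    intros t t' H. rewrite !E. pose proof (Rabs_pos t).
    destruct (Hpsi (Rabs t) (Rabs t')) as [h1 h2]; [lra| lra|]. lra. }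
  assert (Hphi_even : forall t, Rabs t <= s -> phi (- t) = phi t)
    by (intros t Ht; apply Rle_antisym; apply Hphi; rewrite Rabs_Ropp; lra).
  assert (C : forall (f g : R -> R) t, continuous f t -> continuous g t -> continuous (fun t => f t * g t) t)
    by (intros; apply continuous_mult_R; auto).
  rewrite <- (RInt_sym_average (fun t => psi t * phi t * w t)), <- (RInt_sym_average (fun t => psi t * w t))
    by auto.
  rewrite (RInt_ext (fun t => (psi t * phi t * w t + psi (- t) * phi (- t) * w (- t)) / 2)
            (fun t => ps t * phi t * w t) (- s) s),
          (RInt_ext_R (fun t => (psi t * w t + psi (- t) * w (- t)) / 2) (fun t => ps t * w t) (- L) L).
  - apply chebyshev_radial; auto.
  - intros t. rewrite Hws. unfold ps. field.
  - intros t Ht. rewrite Rmin_left, Rmax_right in Ht by lra.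
    simpl. rewrite Hws, Hphi_even by (apply Rabs_le; lra). unfold ps. field.
Qed.

Lemma chebyshev_correlation_step (w p v b : R -> R) W L s : 0 <= s <= L -> 0 <= W ->
  (forall t, continuous w t) -> (forall t, continuous p t) -> (forall t, continuous v t) ->
  (forall t, continuous b t) -> (forall t, 0 <= w t) -> (forall t, w (- t) = w t) ->
  unimodal_on L b -> radially_nonincreasing s v -> (forall t, Rabs t <= s -> 0 <= v t) ->
  (forall t, p t * W >= b t * v t) ->
  RInt (fun t => p t * w t) (- s) s * (W * RInt w (- L) L) >=
  RInt (fun t => b t * w t) (- L) L * RInt (fun t => v t * w t) (- s) s.
Proof.
  intros Hs HW Cw Cp Cv Cb Hw Hwe Hb Hv Hv0 Hpv.
  assert (HO : 0 <= RInt w (- L) L) by (apply RInt_ge_0; [lra| apply ex_RInt_R_continuous; auto| auto]).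
  assert (Ex : forall g : R -> R, (forall t, continuous g t) -> ex_RInt_R g (- s) s)
    by (intros; apply ex_RInt_R_continuous; auto).
  assert (Step : W * RInt (fun t => p t * w t) (- s) s >= RInt (fun t => b t * v t * w t) (- s) s).
  { rewrite <- RInt_scal_R by (apply Ex; intros; apply continuous_mult_R; auto).
    apply Rle_ge, RInt_le; [lra| apply Ex| apply Ex|].
    - intros; apply continuous_mult_R; auto; apply continuous_mult_R; auto.
    - intros; apply (continuous_mult_R (fun _ => W) (fun t => p t * w t)), continuous_mult_R; auto.
      apply continuous_const_R.
    - intros t _. specialize (Hpv t). specialize (Hw t). nra. }
  pose proof (chebyshev_unimodal w b v L s) as Cheb.
  assert (RInt w (- L) L * RInt (fun t => b t * v t * w t) (- s) s >=
          RInt (fun t => b t * w t) (- L) L * RInt (fun t => v t * w t) (- s) s) by (apply Cheb; auto).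
  nra.
Qed.

Lemma class_C1_unimodal g L : class_C1 g -> unimodal_on L g.
Proof.
  intros [_ [_ [Hpos [Hconv Hmax]]]] t t' Ht _.
  split; apply Rnot_lt_le; intros Hl.
  - pose proof (Hpos t). pose proof (Hmax t').
    assert (Hm : (g t + g t') / 2 < g t) by (apply (Hconv ((g t + g t') / 2) ltac:(lra) 0 t t'); [split| |]; lra).
    lra.
  - pose proof (Hpos (- t)). pose proof (Hmax (- t')).
    assert (Hm : (g (- t) + g (- t')) / 2 < g (- t))
      by (apply (Hconv ((g (- t) + g (- t')) / 2) ltac:(lra) (- t') (- t) 0); [split| |]; lra).
    lra.
Qed.

Section Induction.
Variables (L : R) (d : nat) (rho : nat -> R -> R) (c : nat -> R).
Hypothesis HL : 0 <= L.
Hypothesis Hrho : forall i, (i < d)%nat -> pos_cont_on_halfline (rho i).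
Hypothesis Hc : nonneg_coef d c.

Let z : nat -> R := fun _ => 0.
Let Wk (k : nat) : R := prodR k (fun i => RInt (fun t => rho i (Rabs t)) (- L) L).

Lemma Wk_ge0 k : (k <= d)%nat -> 0 <= Wk k.
Proof.
  intros Hk. apply prodR_ge0. intros i Hi. apply RInt_ge_0; [lra| |].
  - apply ex_RInt_R_continuous. intros; apply continuous_rho_abs, Hrho; lia.
  - intros; left; apply (Hrho i ltac:(lia)), Rabs_pos.
Qed.

Lemma nonneg_coef_z : nonneg_coef d z.
Proof. intros i _. unfold z. lra. Qed.

Lemma ell_int_S_density_factor a G k r x : nonneg_coef d a -> continuous_Rd d G -> (k < d)%nat -> 0 <= r ->
  ell_int L a (fun y => G y * rho k (Rabs (y k))) (S k) r x =
  RInt (fun t => slice_int L a G k t r x * rho k (Rabs t))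
    (- half_width L (a k) r) (half_width L (a k) r).
Proof.
  intros Ha HG Hk Hr.
  assert (HGb : continuous_Rd d (fun y => G y * rho k (Rabs (y k))))
    by (apply continuous_Rd_mult; auto; apply continuous_Rd_rho_coord, Hrho; auto).
  rewrite (ell_int_S_eq L d) by auto. apply RInt_ext_R. intros t. unfold slice_int.
  rewrite (ell_int_scal L d a HL Ha G (fun y => rho k (Rabs (y k)))), upd_eq by
    (auto; try lia; intros y y' Hy; rewrite Hy; auto).
  reflexivity.
Qed.

Variable f : (nat -> R) -> R.
Hypothesis Hfc : continuous_Rd d f.
Hypothesis Hf0 : forall y, 0 <= f y.
Hypothesis Hf1 : forall i x, (i < d)%nat -> class_C1 (fun t => f (upd x i t)).

Let Gf (k : nat) (y : nat -> R) : R := f y * density k rho y.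

Lemma continuous_Rd_Gf k : (k <= d)%nat -> continuous_Rd d (Gf k).
Proof. intros. apply continuous_Rd_mult; auto. apply (continuous_Rd_density d); auto. Qed.

Lemma Gf_ge0 k y : (k <= d)%nat -> 0 <= Gf k y.
Proof. intros. apply Rmult_le_pos; auto. apply (density_ge0 d); auto. Qed.

Lemma cube_slice_unimodal k x : (k < d)%nat ->
  unimodal_on L (fun t => ell_int L z (Gf k) k 1 (upd x k t)).
Proof.
  intros Hk.
  assert (Hcmp : forall u u', (forall y, f (upd y k u') <= f (upd y k u)) ->
    ell_int L z (Gf k) k 1 (upd x k u') <= ell_int L z (Gf k) k 1 (upd x k u)).
  { intros u u' Hle. rewrite (ell_int_shift L z (Gf k) k 1 x u u'), (ell_int_shift L z (Gf k) k 1 x u u).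
    apply (ell_int_mono L d z); try lra; try lia; try apply nonneg_coef_z;
      try (apply continuous_Rd_upd, continuous_Rd_Gf; lia).
    - intros y. apply Gf_ge0. lia.
    - intros y. unfold Gf.
      replace (density k rho (upd y k u')) with (density k rho (upd y k u)).
      + apply Rmult_le_compat_r; auto. apply (density_ge0 d); auto. lia.
      + unfold density. apply prodR_ext. intros i Hi. rewrite !upd_neq by lia. reflexivity. }
  intros t t' Ht Ht'. split; apply Hcmp; intros y;
    destruct (class_C1_unimodal _ L (Hf1 k y Hk) t t' Ht Ht'); auto.
Qed.

Lemma density_slice_radial k r x s : (k < d)%nat ->
  radially_nonincreasing s (fun t => slice_int L c (density k rho) k t r x).
Proof.
  intros Hk t t' Ht. unfold slice_int.
  rewrite (ell_int_indep L c (density k rho) k _ (upd x k t') (upd x k t))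
    by (intros y y' Hy; unfold density; apply prodR_ext; intros i Hi; rewrite Hy; auto).
  apply (ell_int_mono L d c); auto; try lia; try (apply (continuous_Rd_density d); auto; lia).
  - intros; apply (density_ge0 d); auto; lia.
  - intros; lra.
  - assert (0 <= c k) by (apply Hc; lia).
    assert (t ^ 2 <= t' ^ 2) by (rewrite <- (pow2_abs t), <- (pow2_abs t'); pose proof (Rabs_pos t); nra).
    unfold Rmax. do 2 destruct Rle_dec; nra.
Qed.

Lemma slice_int_z_unit G k t x : slice_int L z G k t 1 x = ell_int L z G k 1 (upd x k t).
Proof. unfold slice_int, z. f_equal. unfold Rmax. destruct Rle_dec; lra. Qed.

Lemma half_width_z k : half_width L (z k) 1 = L.
Proof. unfold half_width, z. destruct Rle_dec; lra. Qed.

Lemma Gf_S k : Gf (S k) = fun y => Gf k y * rho k (Rabs (y k)).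
Proof. apply functional_extensionality. intros y. unfold Gf, density. simpl. ring. Qed.

Lemma ell_int_correlation : forall k, (k <= d)%nat -> forall r x,
  ell_int L c (Gf k) k r x * Wk k >= ell_int L z (Gf k) k 1 x * ell_int L c (density k rho) k r x.
Proof.
  induction k as [|k IH]; intros Hk r x.
  { unfold ell_int, Gf, density, ell_ind, Wk; simpl. destruct (Rle_dec 0 r); destruct (Rle_dec 0 1); lra. }
  destruct (Rlt_le_dec r 0) as [Hr|Hr].
  { rewrite (ell_int_neg_radius L c (Gf (S k))), (ell_int_neg_radius L c (density (S k) rho))
      by (auto; apply (nonneg_coef_le d); auto). lra. }
  assert (Hk' : (k < d)%nat) by lia.
  set (w := fun t => rho k (Rabs t)).
  set (s := half_width L (c k) r).
  set (p := fun t => slice_int L c (Gf k) k t r x).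
  set (v := fun t => slice_int L c (density k rho) k t r x).
  set (bb := fun t => ell_int L z (Gf k) k 1 (upd x k t)).
  assert (Hs : 0 <= s <= L) by apply half_width_bounds, HL.
  assert (Cw : forall t, continuous w t) by (intros; apply continuous_rho_abs, Hrho; auto).
  assert (Hw : forall t, 0 <= w t) by (intros; left; apply (Hrho k Hk'), Rabs_pos).
  assert (Cp : forall t, continuous p t)
    by (intros; apply (slice_int_continuous L d); auto; apply continuous_Rd_Gf; lia).
  assert (Cv : forall t, continuous v t)
    by (intros; apply (slice_int_continuous L d); auto; apply (continuous_Rd_density d); auto; lia).
  assert (Cbb : forall t, continuous bb t)
    by (intros; apply (continuous_rx_upd d); [apply continuous_rx_ell_int;
      auto; try apply nonneg_coef_z; try apply continuous_Rd_Gf; lia| lra]).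
  assert (EP : ell_int L c (Gf (S k)) (S k) r x = RInt (fun t => p t * w t) (- s) s)
    by (rewrite Gf_S; apply ell_int_S_density_factor; auto; apply continuous_Rd_Gf; lia).
  assert (EV : ell_int L c (density (S k) rho) (S k) r x = RInt (fun t => v t * w t) (- s) s)
    by (apply ell_int_S_density_factor; auto; apply (continuous_Rd_density d); auto; lia).
  assert (EB : ell_int L z (Gf (S k)) (S k) 1 x = RInt (fun t => bb t * w t) (- L) L).
  { rewrite Gf_S, ell_int_S_density_factor, half_width_z by
      (auto; try apply nonneg_coef_z; try apply continuous_Rd_Gf; try lia; lra).
    apply RInt_ext_R. intros t. rewrite slice_int_z_unit. reflexivity. }
  assert (EW : Wk (S k) = Wk k * RInt w (- L) L) by reflexivity.
  assert (HW : 0 <= Wk k) by (apply Wk_ge0; lia).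
  assert (HIH : forall t, p t * Wk k >= bb t * v t).
  { intros t. unfold p, v, bb, slice_int. apply IH. lia. }
  rewrite EP, EV, EB, EW. apply chebyshev_correlation_step; auto.
  - intros t. unfold w. rewrite Rabs_Ropp. reflexivity.
  - apply cube_slice_unimodal; auto.
  - apply density_slice_radial; auto.
  - intros t _. apply (ell_int_ge0 L d c); auto; try lia.
    + apply (continuous_Rd_density d); auto; lia.
    + intros; apply (density_ge0 d); auto; lia.
Qed.

End Induction.

Lemma int_Rd_eventually_const d F X M :
  (forall L, M <= L -> box_int L d F (fun _ => 0) = X) -> int_Rd d F = X.
Proof.
  intros H. assert (H1 : int_Rd_is d F X).
  { intros eps He. exists M. intros L HL. rewrite H, Rminus_diag, Rabs_R0 by auto. lra. }
  pose proof (epsilon_spec (inhabits 0) (int_Rd_is d F) (ex_intro _ X H1)) as H2.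
  unfold int_Rd. set (I := epsilon (inhabits 0) (int_Rd_is d F)) in *.
  apply NNPP; intros Hne.
  assert (He : 0 < Rabs (I - X) / 2) by (apply Rdiv_lt_0_compat; [apply Rabs_pos_lt; intro h; apply Hne; lra| lra]).
  destruct (H2 _ He) as [M2 HM2]. specialize (HM2 (Rmax M M2) (Rmax_r _ _)).
  rewrite H in HM2 by apply Rmax_l. rewrite <- Rabs_Ropp in HM2.
  replace (- (X - I)) with (I - X) in HM2 by ring. lra.
Qed.

Lemma int_Rd_ell_int_supported d L0 c G K r : 0 <= K <= L0 -> nonneg_coef d c -> continuous_Rd d G ->
  (forall y, (exists i, (i < d)%nat /\ K < Rabs (y i)) -> G y = 0) ->
  int_Rd d (fun y => G y * ell_ind c r d y) = ell_int L0 c G d r (fun _ => 0).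
Proof.
  intros HK Hc HG Hz. apply (int_Rd_eventually_const _ _ _ L0). intros L HL.
  apply (ell_int_cube_supported d L L0 c G K); auto; lra.
Qed.

Lemma int_Rd_ell_int_ellipsoid d L0 c G : 0 <= L0 -> (forall i, (i < d)%nat -> 0 < c i) ->
  (forall i r, (i < d)%nat -> 0 <= r <= 1 -> sqrt (r / c i) <= L0) -> continuous_Rd d G ->
  int_Rd d (fun y => G y * ell_ind c 1 d y) = ell_int L0 c G d 1 (fun _ => 0).
Proof.
  intros HL0 Hc Hq HG. apply (int_Rd_eventually_const _ _ _ L0). intros L HL.
  apply (ell_int_cube_contains_ellipsoid d L L0 c G); auto; try lra.
  intros i r Hi Hr. specialize (Hq i r Hi Hr). split; lra.
Qed.

Lemma RInt_rho_abs_in_01 rho L : 0 <= L -> pos_cont_on_halfline rho ->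
  improper_int_R (fun t => rho (Rabs t)) 1 -> 0 <= RInt (fun t => rho (Rabs t)) (- L) L <= 1.
Proof.
  intros HL Hrho Himp.
  assert (Cw : forall t, continuous (fun t => rho (Rabs t)) t) by (intros; apply continuous_rho_abs; auto).
  assert (Hw : forall t, 0 <= rho (Rabs t)) by (intros; left; apply Hrho, Rabs_pos).
  assert (Pos : forall u v, u <= v -> 0 <= RInt (fun t => rho (Rabs t)) u v)
    by (intros; apply RInt_ge_0; auto; apply ex_RInt_R_continuous; auto).
  split; [apply Pos; lra|]. apply Rnot_lt_le. intros Hgt.
  destruct (Himp (RInt (fun t => rho (Rabs t)) (- L) L - 1) ltac:(lra)) as [M HM].
  set (L' := Rmax M L). specialize (HM L' (Rmax_l _ _)).
  assert (HL' : L <= L') by apply Rmax_r.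
  rewrite RI_RInt, (RInt_sym_split _ L L') in HM by (auto; apply ex_RInt_R_continuous; auto).
  pose proof (Pos (- L') (- L) ltac:(lra)). pose proof (Pos L L' ltac:(lra)).
  rewrite Rabs_right in HM by lra. lra.
Qed.

Lemma ind_B_ell_ind d a y : ind_B d a y = ell_ind (fun i => / a i ^ 2) 1 d y.
Proof.
  unfold ind_B, ell_ind. rewrite (sumR_ext d _ (fun i => / a i ^ 2 * y i ^ 2)); [reflexivity|].
  intros i _. unfold Rdiv. ring.
Qed.

Lemma ell_ind_zero_coef d y : ell_ind (fun _ => 0) 1 d y = 1.
Proof. unfold ell_ind. rewrite sumR_zero. destruct Rle_dec; lra. Qed.

Lemma sqrt_scaled_le r a : 0 <= r <= 1 -> 0 < a -> sqrt (r / / a ^ 2) <= a.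
Proof.
  intros Hr Ha. apply Rle_trans with (sqrt (a ^ 2)); [|rewrite sqrt_pow2; lra].
  apply sqrt_le_1_alt. replace (r / / a ^ 2) with (r * a ^ 2) by (field; lra).
  pose proof (pow2_ge_0 a). nra.
Qed.

Lemma int_Rd_as_ell_int d rho a f : (forall i, (i < d)%nat -> pos_cont_on_halfline (rho i)) ->
  (forall i, (i < d)%nat -> 0 < a i) -> class_barCd d f ->
  let c := fun i => / a i ^ 2 in let G := fun y => f y * density d rho y in
  exists L0, 0 <= L0 /\
    int_Rd d (fun x => f x * ind_B d a x * density d rho x) = ell_int L0 c G d 1 (fun _ => 0) /\
    int_Rd d (fun x => f x * density d rho x) = ell_int L0 (fun _ => 0) G d 1 (fun _ => 0) /\
    int_Rd d (fun x => ind_B d a x * density d rho x) = ell_int L0 c (density d rho) d 1 (fun _ => 0).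
Proof.
  intros Hrho Ha [Hfc [[K HK] _]] c G.
  set (L0 := Rabs K + sumR d (fun i => Rabs (a i)) + 1).
  assert (HL0 : 0 <= Rabs K <= L0).
  { pose proof (Rabs_pos K). pose proof (sumR_ge0 d (fun i => Rabs (a i)) ltac:(intros; apply Rabs_pos)).
    unfold L0. lra. }
  assert (Hc : forall i, (i < d)%nat -> 0 < c i) by (intros; apply Rinv_0_lt_compat, pow_lt, Ha; auto).
  assert (Hsq : forall i r, (i < d)%nat -> 0 <= r <= 1 -> sqrt (r / c i) <= L0).
  { intros i r Hi Hr. eapply Rle_trans; [apply sqrt_scaled_le; auto|].
    pose proof (sumR_ge_term d (fun i => Rabs (a i)) i ltac:(intros; apply Rabs_pos) Hi) as Hai.
    simpl in Hai. rewrite Rabs_right in Hai by (apply Rle_ge; left; auto). unfold L0. lra. }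
  assert (HG : continuous_Rd d G) by (apply continuous_Rd_mult, continuous_Rd_density; auto).
  assert (HGK : forall y, (exists i, (i < d)%nat /\ Rabs K < Rabs (y i)) -> G y = 0).
  { intros y [i [Hi Hy]]. unfold G. rewrite (HK y); [ring|].
    exists i. pose proof (Rle_abs K). split; auto; lra. }
  exists L0. split; [lra|].
  rewrite <- (int_Rd_ell_int_supported d L0 c G (Rabs K)), <- (int_Rd_ell_int_supported d L0 _ G (Rabs K)),
    <- (int_Rd_ell_int_ellipsoid d L0) by (auto; try lra; try apply (continuous_Rd_density d); auto;
      intros i Hi; try specialize (Hc i Hi); lra).
  repeat split; f_equal; apply functional_extensionality; intros y; unfold G, c;
    rewrite ?ind_B_ell_ind, ?ell_ind_zero_coef; ring.
Qed.

Theorem theorem3p1 (d : nat) (rho : nat -> R -> R) (a : nat -> R)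
  (f : (nat -> R) -> R) :
  (1 <= d)%nat ->
  (forall i, (i < d)%nat -> pos_cont_on_halfline (rho i)) ->
  (forall i, (i < d)%nat -> improper_int_R (fun t => rho i (Rabs t)) 1) ->
  (forall i, (i < d)%nat -> 0 < a i) ->
  class_barCd d f ->
  int_Rd d (fun x => f x * ind_B d a x * density d rho x)
  >= int_Rd d (fun x => f x * density d rho x)
     * int_Rd d (fun x => ind_B d a x * density d rho x).
Proof.
  intros _ Hrho Himp Ha Hf.
  destruct (int_Rd_as_ell_int d rho a f Hrho Ha Hf) as [L0 [HL0 [-> [-> ->]]]].
  destruct Hf as [Hfc [_ [Hf0 Hf1]]].
  set (c := fun i => / a i ^ 2).
  assert (Hc : nonneg_coef d c) by (intros i Hi; apply Rlt_le, Rinv_0_lt_compat, pow_lt, Ha; auto).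
  pose proof (ell_int_correlation L0 d rho c HL0 Hrho Hc f Hfc Hf0 Hf1 d (le_n d) 1 (fun _ => 0))
    as Hcorr; cbv beta in Hcorr.
  assert (0 <= prodR d (fun i => RInt (fun t => rho i (Rabs t)) (- L0) L0) <= 1)
    by (apply prodR_in_01; intros; apply RInt_rho_abs_in_01; auto).
  assert (0 <= ell_int L0 c (fun y => f y * density d rho y) d 1 (fun _ => 0))
    by (apply (ell_int_ge0 L0 d c); auto; [apply continuous_Rd_mult, (continuous_Rd_density d); auto|
        intros; apply Rmult_le_pos; auto; apply (density_ge0 d); auto]).
  nra.
Qed.
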